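(* Let $\mathscr{H}$ be a complex Hilbert space and let $N(\cdot)$ be a norm on $\mathbb{B}(\mathscr{H})$ which is an algebra norm ($N(XY)\leq N(X)N(Y)$ for all $X,Y$) and self-adjoint ($N(X^* )=N(X)$ for all $X$). Then for all $B,C\in\mathbb{B}(\mathscr{H})$, $$\frac18N(C^*C+B^*B)+\frac12\max\{w_N(B+C),w_N(B-C)\}\,|w_N(B)-w_N(C)|\leq w_{(N,e)}^2(B,C).$$
   Context: For $T\in\mathbb{B}(\mathscr{H})$: $\Re(T)=\frac12(T+T^* )$ and $w_N(T)=\sup_{\theta\in\mathbb{R}}N(\Re(e^{i\theta}T))$. For $B,C\in\mathbb{B}(\mathscr{H})$, $w_{(N,e)}(B,C)=\sup_{\lambda_1,\lambda_2\in\mathbb{C},\ |\lambda_1|^2+|\lambda_2|^2\leq 1}\sup_{\theta\in\mathbb{R}} N(\Re(e^{i\theta}(\lambda_1B+\lambda_2C)))$. *)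

From HB Require Import structures.
From mathcomp Require Import all_boot all_order all_algebra.
From mathcomp Require Import boolp classical_sets reals trigo.
From mathcomp Require Import complex.
From Stdlib Require Import ClassicalEpsilon.

Set Implicit Arguments. Unset Strict Implicit. Unset Printing Implicit Defensive.
Import Order.TTheory GRing.Theory Num.Theory.
Local Open Scope ring_scope.

Section Hilbert.
Variables (R : realType) (H : lmodType R[i]) (ip : H -> H -> R[i]).

Definition hnorm (x : H) : R := Num.sqrt (complex.Re (ip x x)).

Record is_hilbert : Prop := IsHilbert {
  ip_linear : forall (a : R[i]) (x y z : H), ip (a *: x + y) z = a * ip x z + ip y z;
  ip_conj : forall x y : H, ip y x = conjc (ip x y);
  ip_ge0 : forall x : H, 0 <= ip x x;
  ip_eq0 : forall x : H, ip x x = 0 -> x = 0;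
  ip_complete : forall u : nat -> H,
     (forall e : R, 0 < e -> exists n0 : nat, forall m n, (n0 <= m)%N -> (n0 <= n)%N ->
        hnorm (u m - u n) < e) ->
     exists l : H, forall e : R, 0 < e -> exists n0 : nat, forall n, (n0 <= n)%N ->
        hnorm (u n - l) < e }.

Definition bounded_op (T : H -> H) : Prop :=
  (forall (a : R[i]) (x y : H), T (a *: x + y) = a *: T x + T y) /\
  exists M : R, forall x : H, hnorm (T x) <= M * hnorm x.

Definition adj (T : H -> H) : H -> H :=
  epsilon (inhabits id) (fun S : H -> H => forall x y : H, ip (T x) y = ip x (S y)).

Definition opadd (S T : H -> H) : H -> H := fun x => S x + T x.
Definition opsub (S T : H -> H) : H -> H := fun x => S x - T x.
Definition opscale (a : R[i]) (T : H -> H) : H -> H := fun x => a *: T x.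
Definition opmul (S T : H -> H) : H -> H := fun x => S (T x).

Definition ReOp (T : H -> H) : H -> H := opscale (2^-1) (opadd T (adj T)).

Definition expi (t : R) : R[i] := (cos t +i* sin t)%C.

Record is_sa_algebra_norm (N : (H -> H) -> R) : Prop := IsSANorm {
  N_ge0 : forall X, bounded_op X -> 0 <= N X;
  N_eq0 : forall X, bounded_op X -> N X = 0 -> X = (fun _ => 0);
  N_scale : forall a X, bounded_op X -> N (opscale a X) = ComplexField.Normc.normc a * N X;
  N_triangle : forall X Y, bounded_op X -> bounded_op Y -> N (opadd X Y) <= N X + N Y;
  N_mul : forall X Y, bounded_op X -> bounded_op Y -> N (opmul X Y) <= N X * N Y;
  N_adj : forall X, bounded_op X -> N (adj X) = N X }.

Definition wN (N : (H -> H) -> R) (T : H -> H) : R :=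
  sup [set y : R | exists t : R, y = N (ReOp (opscale (expi t) T))].

Definition wNe (N : (H -> H) -> R) (B C : H -> H) : R :=
  sup [set y : R | exists (l1 l2 : R[i]) (t : R),
         ComplexField.Normc.normc l1 ^+ 2 + ComplexField.Normc.normc l2 ^+ 2 <= 1 /\
         y = N (ReOp (opscale (expi t) (opadd (opscale l1 B) (opscale l2 C))))].

End Hilbert.

From Pilot Require Import Defs.
From mathcomp Require Import all_boot all_order all_algebra.
From mathcomp Require Import boolp classical_sets reals trigo complex.
From mathcomp Require Import ring lra.
From Stdlib Require Import ClassicalEpsilon.
Set Implicit Arguments. Unset Strict Implicit. Unset Printing Implicit Defensive.
Import Order.TTheory GRing.Theory Num.Theory.
Local Open Scope ring_scope.
Local Open Scope classical_set_scope.

(* Write b := w_N(B) and c := w_N(C).  The Cartesian decomposition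
   X = Re X + i Re(-i X) gives N(X) <= 2 w_N(X), so by submultiplicativity and
   self-adjointness N(C^*C + B^*B) <= N(C)^2 + N(B)^2 <= 4 (b^2 + c^2).  Since
   w_N is subadditive and invariant under X |-> -X, max(w_N(B+C), w_N(B-C)) <= b + c,
   and taking (l1, l2) = (1, 0), (0, 1) gives b, c <= w_(N,e)(B, C).  The left-hand
   side is then at most (b^2 + c^2)/2 + |b^2 - c^2|/2 = max(b^2, c^2).
   Because the axioms on N only concern bounded operators, this needs every bounded
   operator to have a bounded adjoint; adjoints come from the Riesz representation
   theorem, whose representing vector is a norm minimizer on the hyperplane
   [f = 1], obtained as the limit of a minimizing sequence (Cauchy by the
   parallelogram law). *)

Lemma inv_succ_lt (R : archiRealFieldType) (c : R) :
  0 < c -> exists k, forall n, (k <= n)%N -> n.+1%:R^-1 < c.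
Proof.
move=> c0; have c0' : 0 <= c^-1 by rewrite invr_ge0 ltW.
exists (Num.bound c^-1) => n kn.
rewrite -[c]invrK ltf_pV2 ?posrE ?invr_gt0 ?ltr0Sn //.
by apply: lt_le_trans (archi_boundP c0') _; rewrite ler_nat; exact: leqW.
Qed.

Lemma sqrtr_le (R : rcfType) (a b : R) : 0 <= b -> a <= b ^+ 2 -> Num.sqrt a <= b.
Proof. by move=> b0 ab; rewrite -(ger0_norm b0) -sqrtr_sqr ler_wsqrtr. Qed.

Section LinearFunctional.
Variables (R : rcfType) (H : lmodType R[i]) (g : H -> R[i]).
Hypothesis g_linear : forall a x y, g (a *: x + y) = a * g x + g y.

Lemma lfunD x y : g (x + y) = g x + g y.
Proof. by rewrite -[x in LHS]scale1r g_linear mul1r. Qed.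

Lemma lfun0 : g 0 = 0.
Proof. by apply: (addrI (g 0)); rewrite -lfunD !addr0. Qed.

Lemma lfunZ a x : g (a *: x) = a * g x.
Proof. by rewrite -[a *: x]addr0 g_linear lfun0 addr0. Qed.

Lemma lfunB x y : g (x - y) = g x - g y.
Proof. by rewrite lfunD -scaleN1r lfunZ mulN1r. Qed.

End LinearFunctional.

Section ComplexSquaredNorm.
Variable R : rcfType.

Definition sqnormc (z : R[i]) : R := complex.Re z ^+ 2 + complex.Im z ^+ 2.

Lemma sqnormc_ge0 z : 0 <= sqnormc z.
Proof. by rewrite addr_ge0 ?sqr_ge0. Qed.

Lemma sqnormc_eq0 z : sqnormc z = 0 -> z = 0.
Proof.
case: z => a b; rewrite /sqnormc /= => h; have a0 : a = 0 by nra.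
have b0 : b = 0 by nra.
by rewrite a0 b0.
Qed.

Lemma normcE z : ComplexField.Normc.normc z = Num.sqrt (sqnormc z).
Proof. by case: z. Qed.

Lemma normc_ge0 (z : R[i]) : 0 <= ComplexField.Normc.normc z.
Proof. by rewrite normcE sqrtr_ge0. Qed.

End ComplexSquaredNorm.

Section InnerProduct.
Variables (R : realType) (H : lmodType R[i]) (ip : H -> H -> R[i]).
Hypothesis hH : is_hilbert ip.
Local Notation hn := (hnorm ip).

Lemma ipDl x y z : ip (x + y) z = ip x z + ip y z.
Proof. exact: (lfunD (g := ip^~ z) (fun a x y => ip_linear hH a x y z)). Qed.

Lemma ipZl a x z : ip (a *: x) z = a * ip x z.
Proof. exact: (lfunZ (g := ip^~ z) (fun a x y => ip_linear hH a x y z)). Qed.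

Lemma ipBl x y z : ip (x - y) z = ip x z - ip y z.
Proof. exact: (lfunB (g := ip^~ z) (fun a x y => ip_linear hH a x y z)). Qed.

Lemma ipDr x y z : ip z (x + y) = ip z x + ip z y.
Proof. by rewrite !(ip_conj hH _ z) ipDl rmorphD. Qed.

Lemma ipZr a x z : ip z (a *: x) = conjc a * ip z x.
Proof. by rewrite !(ip_conj hH _ z) ipZl rmorphM. Qed.

Lemma ipBr x y z : ip z (x - y) = ip z x - ip z y.
Proof. by rewrite !(ip_conj hH _ z) ipBl rmorphB. Qed.

Lemma ip0r z : ip z 0 = 0.
Proof. by rewrite -(subrr z) ipBr subrr. Qed.

Definition sqnorm x := complex.Re (ip x x).
Definition rip x y := complex.Re (ip x y).

Lemma ip_self x : ip x x = (sqnorm x)%:C%C.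
Proof.
by have := ip_ge0 hH x; rewrite /sqnorm; case: (ip x x) => a b; rewrite lecE /= => /andP[/eqP -> _].
Qed.

Lemma sqnorm_ge0 x : 0 <= sqnorm x.
Proof. by have := ip_ge0 hH x; rewrite /sqnorm; case: (ip x x) => a b; rewrite lecE => /andP[]. Qed.

Lemma sqnorm_eq0 x : sqnorm x = 0 -> x = 0.
Proof. by move=> x0; apply: (ip_eq0 hH); rewrite ip_self x0. Qed.

Lemma sqr_hnorm x : hn x ^+ 2 = sqnorm x.
Proof. by rewrite sqr_sqrtr ?sqnorm_ge0. Qed.

Lemma hnorm_ge0 x : 0 <= hn x.
Proof. exact: sqrtr_ge0. Qed.

Lemma hnorm_lt x e : 0 < e -> (hn x < e) = (sqnorm x < e ^+ 2).
Proof. by move=> e0; rewrite -[e in LHS](gtr0_norm e0) -sqrtr_sqr ltr_sqrt ?exprn_gt0. Qed.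

Lemma sqnormD x y : sqnorm (x + y) = sqnorm x + 2 * rip x y + sqnorm y.
Proof.
rewrite /sqnorm /rip ipDl !ipDr (ip_conj hH x y).
by case: (ip x x) (ip x y) (ip y y) => ? ? [? ?] [? ?] /=; lra.
Qed.

Lemma sqnormB x y : sqnorm (x - y) = sqnorm x - 2 * rip x y + sqnorm y.
Proof.
rewrite /sqnorm /rip ipBl !ipBr (ip_conj hH x y).
by case: (ip x x) (ip x y) (ip y y) => ? ? [? ?] [? ?] /=; lra.
Qed.

Lemma sqnormZ a x : sqnorm (a *: x) = sqnormc a * sqnorm x.
Proof. by rewrite {1}/sqnorm ipZl ipZr ip_self; case: a => a b; rewrite /sqnormc /=; ring. Qed.

Lemma sqnormZr (t : R) x : sqnorm (t%:C%C *: x) = t ^+ 2 * sqnorm x.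
Proof. by rewrite sqnormZ /sqnormc /= expr0n addr0. Qed.

Lemma hnormZ a x : hn (a *: x) = ComplexField.Normc.normc a * hn x.
Proof. by rewrite /hnorm -/(sqnorm _) sqnormZ sqrtrM ?sqnormc_ge0 // normcE. Qed.

Lemma hnormN x : hn (- x) = hn x.
Proof.
rewrite -scaleN1r hnormZ.
by rewrite /= sqrrN expr1n oppr0 expr0n addr0 sqrtr1 mul1r.
Qed.

Lemma rip_sqr_le x y : rip x y ^+ 2 <= sqnorm x * sqnorm y.
Proof.
have [y0|y0] := eqVneq (sqnorm y) 0.
  by rewrite (sqnorm_eq0 y0) /rip ip0r expr0n /= mulr_ge0 ?sqnorm_ge0.
have yp : 0 < sqnorm y by rewrite lt_neqAle eq_sym y0 sqnorm_ge0.
(* sqnorm (x + t y) >= 0 at its minimizing t *)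
pose t := - (rip x y / sqnorm y).
have := sqnorm_ge0 (x + t%:C%C *: y).
rewrite sqnormD sqnormZr /rip ipZr conjc_real -/(rip x y).
have -> : complex.Re (t%:C%C * ip x y) = t * rip x y.
  by rewrite /rip; case: (ip x y) => ? ? /=; ring.
have -> : sqnorm x + 2 * (t * rip x y) + t ^+ 2 * sqnorm y
          = (sqnorm x * sqnorm y - rip x y ^+ 2) / sqnorm y by rewrite /t; field.
by rewrite pmulr_lge0 ?invr_gt0 // subr_ge0.
Qed.

Lemma sqnormc_ip_le x y : sqnormc (ip x y) <= sqnorm x * sqnorm y.
Proof.
have := rip_sqr_le (conjc (ip x y) *: x) y.
rewrite /rip ipZl sqnormZ.
have -> : complex.Re ((ip x y)^* * ip x y)%C = sqnormc (ip x y).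
  by case: (ip x y) => ? ?; rewrite /sqnormc /=; ring.
have -> : sqnormc (ip x y)^*%C = sqnormc (ip x y).
  by case: (ip x y) => ? ?; rewrite /sqnormc /= sqrrN.
have [->|w0] := eqVneq (sqnormc (ip x y)) 0; first by rewrite mulr_ge0 ?sqnorm_ge0.
have wp : 0 < sqnormc (ip x y) by rewrite lt_neqAle eq_sym w0 sqnormc_ge0.
by rewrite -mulrA expr2 ler_pM2l.
Qed.

Lemma rip_le x y : rip x y <= hn x * hn y.
Proof.
have := rip_sqr_le x y; rewrite -!sqr_hnorm -exprMn.
have := mulr_ge0 (hnorm_ge0 x) (hnorm_ge0 y).
move: (hn x * hn y) (rip x y) => s r; nra.
Qed.

Lemma hnormD_le x y : hn (x + y) <= hn x + hn y.
Proof.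
apply: sqrtr_le; first by rewrite addr_ge0 ?hnorm_ge0.
by rewrite -/(sqnorm _) sqnormD -!sqr_hnorm; have := rip_le x y; nra.
Qed.

Lemma sqnorm_complete (u : nat -> H) :
  (forall e, 0 < e ->
     exists n0, forall m n, (n0 <= m)%N -> (n0 <= n)%N -> sqnorm (u m - u n) < e) ->
  exists l, forall e, 0 < e -> exists n0, forall n, (n0 <= n)%N -> sqnorm (u n - l) < e.
Proof.
move=> u_cauchy.
have [l ul] : exists l, forall e, 0 < e -> exists n0, forall n, (n0 <= n)%N -> hn (u n - l) < e.
  apply: (ip_complete hH) => e e0; have [n0 hn0] := u_cauchy (e ^+ 2) (exprn_gt0 2 e0).
  by exists n0 => m n mn0 nn0; rewrite hnorm_lt // hn0.
exists l => e e0; have [|n0 hn0] := ul (Num.sqrt e); first by rewrite sqrtr_gt0.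
by exists n0 => n nn0; have := hn0 n nn0; rewrite hnorm_lt ?sqrtr_gt0 // sqr_sqrtr // ltW.
Qed.

Lemma sqnorm_le_of_approx l (d : R) : 0 <= d ->
  (forall e, 0 < e -> exists x, sqnorm x < d + e /\ sqnorm (x - l) < e) -> sqnorm l <= d.
Proof.
move=> d0 approx; rewrite -ler_sqrt // -/(hn l).
apply/ler_addgt0Pr => e e0; have e20 : 0 < e / 2 by rewrite divr_gt0.
have [x [xd xl]] := approx ((e / 2) ^+ 2) (exprn_gt0 2 e20).
have -> : l = x + - (x - l) by rewrite opprB addrC subrK.
apply: le_trans (hnormD_le _ _) _; rewrite hnormN.
have hx : hn x <= Num.sqrt d + e / 2.
  apply: sqrtr_le; first by rewrite addr_ge0 ?sqrtr_ge0 ?ltW.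
  by rewrite sqrrD sqr_sqrtr //; have := sqrtr_ge0 d; nra.
have := xl; rewrite -hnorm_lt //; lra.
Qed.

Lemma orthogonal_of_min l k : (forall s : R[i], sqnorm l <= sqnorm (l + s *: k)) -> ip l k = 0.
Proof.
move=> lmin; set w := sqnormc (ip l k); set q := sqnorm k.
have q0 : 0 <= q := sqnorm_ge0 k.
(* any t in (0, 2/q) works; (q + 1)^-1 also covers q = 0 *)
pose t := (q + 1)^-1.
have t0 : 0 < t by rewrite invr_gt0 ltr_wpDl.
have tq : t * (q + 1) = 1 by rewrite mulVf // gt_eqF // ltr_wpDl.
have := lmin ((- t)%:C%C * ip l k); rewrite sqnormD sqnormZ -/q.
have -> : rip l ((((- t)%:C%C * ip l k) *: k)) = - t * w.
  by rewrite /rip ipZr /w; case: (ip l k) => a b /=; rewrite /sqnormc /=; ring.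
have -> : sqnormc ((- t)%:C%C * ip l k) = t ^+ 2 * w.
  by rewrite /w; case: (ip l k) => a b /=; rewrite /sqnormc /=; ring.
have tq' : t * q = 1 - t by lra.
have -> : t ^+ 2 * w * q = t * w * (t * q) by ring.
rewrite tq' => h.
have : 0 <= t * - (w * (1 + t)) by lra.
have t1 : 0 < 1 + t by lra.
rewrite pmulr_rge0 // oppr_ge0 pmulr_lle0 // => wle.
by apply: sqnormc_eq0; apply/eqP; rewrite eq_le wle sqnormc_ge0.
Qed.

Section Riesz.
Variables (f : H -> R[i]) (M : R).
Hypothesis f_linear : forall a x y, f (a *: x + y) = a * f x + f y.
Hypothesis f_bounded : forall x, sqnormc (f x) <= M * sqnorm x.

Lemma lfun_eq_of_approx (l : H) (c : R[i]) :
  (forall e, 0 < e -> exists2 x, f x = c & sqnorm (x - l) < e) -> f l = c.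
Proof.
move=> approx; apply/eqP; rewrite eq_sym -subr_eq0; apply/eqP/sqnormc_eq0/eqP.
rewrite eq_le sqnormc_ge0 andbT; apply/ler_addgt0Pr => e e0; rewrite add0r.
have M1 : 0 < `|M| + 1 by rewrite ltr_wpDl.
have [x fx xl] := approx (e / (`|M| + 1)) (divr_gt0 e0 M1).
rewrite -fx -(lfunB f_linear); apply: le_trans (f_bounded _) _.
have := sqnorm_ge0 (x - l); move: xl; rewrite ltr_pdivlMr // => xl q0.
have := ler_norm M; move: (sqnorm (x - l)) (`|M|) xl q0 => q m; nra.
Qed.

Section Minimizer.
Variable x1 : H.
Hypothesis f_x1 : f x1 = 1.

Let level_sqnorms := [set sqnorm x | x in [set x | f x = 1]].
Let d := inf level_sqnorms.

Let level_has_inf : has_inf level_sqnorms.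
Proof. by split; [exists (sqnorm x1), x1 | exists 0 => _ [y _ <-]; exact: sqnorm_ge0]. Qed.

Let d_le x : f x = 1 -> d <= sqnorm x.
Proof. by move=> fx; apply: ge_inf; [case: level_has_inf | exists x]. Qed.

Let d_ge0 : 0 <= d.
Proof. by apply: lb_le_inf; [case: level_has_inf | move=> _ [y _ <-]; exact: sqnorm_ge0]. Qed.

Lemma level_sqnormB x y : f x = 1 -> f y = 1 ->
  sqnorm (x - y) <= 2 * sqnorm x + 2 * sqnorm y - 4 * d.
Proof.
move=> fx fy; have fm : f ((2^-1)%:C%C *: (x + y)) = 1.
  rewrite (lfunZ f_linear) (lfunD f_linear) fx fy.
  by apply/eqP; rewrite eq_complex /=; apply/andP; split; apply/eqP; field.
have := d_le fm; rewrite sqnormZr sqnormD sqnormB; lra.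
Qed.

Lemma level_minimizer : exists l, f l = 1 /\ forall x, f x = 1 -> sqnorm l <= sqnorm x.
Proof.
have [u hu] : exists u : nat -> H, forall n, f (u n) = 1 /\ sqnorm (u n) < d + n.+1%:R^-1.
  apply: (choice (fun n x => f x = 1 /\ sqnorm x < d + n.+1%:R^-1)) => n.
  have n0 : 0 < n.+1%:R^-1 :> R by rewrite invr_gt0 ltr0Sn.
  by have [_ [x fx <-] xd] := inf_adherent n0 level_has_inf; exists x.
have u_cauchy e : 0 < e ->
    exists n0, forall m n, (n0 <= m)%N -> (n0 <= n)%N -> sqnorm (u m - u n) < e.
  move=> e0; have e4 : 0 < e / 4 by rewrite divr_gt0.
  have [k hk] := inv_succ_lt e4; exists k => m n km kn.
  have := level_sqnormB (hu m).1 (hu n).1; have := (hu m).2; have := (hu n).2.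
  have := hk m km; have := hk n kn; move: (m.+1%:R^-1) (n.+1%:R^-1) => a b; lra.
have [l ul] := sqnorm_complete u_cauchy.
have approx e : 0 < e -> exists n, sqnorm (u n) < d + e /\ sqnorm (u n - l) < e.
  move=> e0; have [k hk] := inv_succ_lt e0; have [n0 hn0] := ul e e0.
  exists (maxn k n0); split; last by apply: hn0; rewrite leq_maxr.
  by apply: lt_le_trans (hu _).2 _; rewrite lerD2l ltW // hk // leq_maxl.
have ld : sqnorm l <= d.
  by apply: sqnorm_le_of_approx => // e e0; have [n []] := approx e e0; exists (u n).
exists l; split; last by move=> x fx; apply: le_trans ld (d_le fx).
apply: lfun_eq_of_approx => e e0; have [n [_ unl]] := approx e e0.
by exists (u n); first exact: (hu n).1.
Qed.

End Minimizer.

Lemma lfun_representation l : f l = 1 -> (forall k, f k = 0 -> ip l k = 0) ->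
  forall x, f x = ip x ((sqnorm l)^-1%:C%C *: l).
Proof.
move=> fl l_orth x.
have l0 : sqnorm l != 0.
  apply/eqP => /sqnorm_eq0 l0; move/eqP: fl; rewrite l0 (lfun0 f_linear).
  by rewrite eq_sym oner_eq0.
have fk : f (x - f x *: l) = 0 by rewrite (lfunB f_linear) (lfunZ f_linear) fl mulr1 subrr.
have := l_orth _ fk; rewrite (ip_conj hH) => /(congr1 conjc).
rewrite conjcK conjc0 ipBl ipZl ip_self => /eqP; rewrite subr_eq0 => /eqP xl.
by rewrite ipZr conjc_real xl mulrCA -rmorphM mulVf // rmorph1 mulr1.
Qed.

Theorem riesz_representation : exists z, forall x, f x = ip x z.
Proof.
have [[x0 fx0]|f0] := pselect (exists x0, f x0 != 0); last first.
  exists 0 => x; rewrite ip0r; apply/eqP/negPn/negP => fx.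
  by apply: f0; exists x.
have f_x1 : f ((f x0)^-1 *: x0) = 1 by rewrite (lfunZ f_linear) mulVf.
have [l [fl l_min]] := level_minimizer f_x1.
exists ((sqnorm l)^-1%:C%C *: l); apply: lfun_representation => // k fk.
apply: orthogonal_of_min => s; apply: l_min.
by rewrite (lfunD f_linear) (lfunZ f_linear) fk mulr0 addr0.
Qed.

End Riesz.

End InnerProduct.

Section Adjoint.
Variables (R : realType) (H : lmodType R[i]) (ip : H -> H -> R[i]).
Hypothesis hH : is_hilbert ip.
Local Notation hn := (hnorm ip).
Local Notation bounded := (bounded_op ip).

Lemma ip_injr u v : (forall x, ip x u = ip x v) -> u = v.
Proof.
move=> uv; apply/eqP; rewrite -subr_eq0; apply/eqP/(ip_eq0 hH).
by rewrite (ipBr hH) uv subrr.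
Qed.

Lemma adjointP X : bounded X -> forall x y, ip (X x) y = ip x (adj ip X y).
Proof.
case=> X_lin [M XM].
apply: (epsilon_spec (inhabits id) (fun S => forall x y, ip (X x) y = ip x (S y))).
suff /choice[S hS] : forall y, exists z, forall x, ip (X x) y = ip x z by exists S.
move=> y; apply: (riesz_representation hH (M := M ^+ 2 * sqnorm ip y)).
  by move=> a x x'; rewrite X_lin (ip_linear hH).
move=> x; apply: le_trans (sqnormc_ip_le hH _ _) _.
rewrite mulrAC ler_wpM2r ?sqnorm_ge0 // -!(sqr_hnorm hH) -exprMn.
by have := XM x; have := hnorm_ge0 ip (X x); nra.
Qed.

Lemma adj_unique X S : bounded X -> (forall x y, ip (X x) y = ip x (S y)) -> adj ip X = S.
Proof. by move=> hX hS; apply: funext => y; apply: ip_injr => x; rewrite -adjointP // hS. Qed.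

Lemma bounded_adj X : bounded X -> bounded (adj ip X).
Proof.
move=> hX; have adjX := adjointP hX; case: hX => X_lin [M XM]; split.
  by move=> a x y; apply: ip_injr => z; rewrite -adjX !(ipDr hH) !(ipZr hH) -!adjX.
exists `|M| => y; set a := hn (adj ip X y); set m := `|M| * hn y.
have a0 : 0 <= a := hnorm_ge0 ip _.
have m0 : 0 <= m by rewrite mulr_ge0 ?hnorm_ge0.
have : a ^+ 2 <= a * m.
  rewrite (sqr_hnorm hH) /sqnorm -adjX; apply: le_trans (rip_le hH _ _) _.
  rewrite /m mulrA [a * _]mulrC; apply: (ler_wpM2r (hnorm_ge0 ip y)).
  exact: le_trans (XM _) (ler_wpM2r a0 (ler_norm M)).
by nra.
Qed.

Lemma bounded_opadd X Y : bounded X -> bounded Y -> bounded (opadd X Y).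
Proof.
move=> [X_lin [M XM]] [Y_lin [M' YM]]; split.
  by move=> a x y; rewrite /opadd X_lin Y_lin scalerDr addrACA.
exists (M + M') => x; apply: le_trans (hnormD_le hH _ _) _.
by rewrite mulrDl lerD.
Qed.

Lemma bounded_opscale a X : bounded X -> bounded (opscale a X).
Proof.
move=> [X_lin [M XM]]; split.
  by move=> b x y; rewrite /opscale X_lin scalerDr !scalerA mulrC.
exists (ComplexField.Normc.normc a * M) => x; rewrite /opscale (hnormZ hH) -mulrA.
by rewrite ler_wpM2l ?normc_ge0.
Qed.

Lemma bounded_opmul X Y : bounded X -> bounded Y -> bounded (opmul X Y).
Proof.
move=> [X_lin [M XM]] [Y_lin [M' YM]]; split.
  by move=> a x y; rewrite /opmul Y_lin X_lin.
exists (`|M| * M') => x; apply: le_trans (XM _) _.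
apply: le_trans (ler_wpM2r (hnorm_ge0 ip _) (ler_norm M)) _.
by rewrite -mulrA ler_wpM2l.
Qed.

Lemma adj_opadd X Y : bounded X -> bounded Y -> adj ip (opadd X Y) = opadd (adj ip X) (adj ip Y).
Proof.
move=> hX hY; apply: adj_unique; first exact: bounded_opadd.
by move=> x y; rewrite /opadd (ipDl hH) (ipDr hH) !adjointP.
Qed.

Lemma adj_opscale a X : bounded X -> adj ip (opscale a X) = opscale (conjc a) (adj ip X).
Proof.
move=> hX; apply: adj_unique; first exact: bounded_opscale.
by move=> x y; rewrite /opscale (ipZl hH) (ipZr hH) conjcK adjointP.
Qed.

End Adjoint.

Section Scalars.
Variable R : realType.

Lemma normc_expi (t : R) : ComplexField.Normc.normc (expi t) = 1.
Proof. by rewrite /expi /= cos2Dsin2 sqrtr1. Qed.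

Lemma expi0 : expi 0 = 1 :> R[i].
Proof. by apply/eqP; rewrite /expi eq_complex /= cos0 sin0 !eqxx. Qed.

Lemma expi_Npihalf : expi (- (pi / 2)) = - 'i%C :> R[i].
Proof. by apply/eqP; rewrite /expi eq_complex /= cosN sinN cos_pihalf sin_pihalf oppr0 !eqxx. Qed.

Lemma normc_half : ComplexField.Normc.normc (2^-1 : R[i]) = 2^-1.
Proof.
rewrite ComplexField.Normc.normcV; congr (_^-1).
by rewrite -[2 : R[i]]/(1 *+ 2) normcMn ComplexField.Normc.normc1.
Qed.

End Scalars.

Section NumericalRadius.
Variables (R : realType) (H : lmodType R[i]) (ip : H -> H -> R[i]).
Hypothesis hH : is_hilbert ip.
Variable N : (H -> H) -> R.
Hypothesis hN : is_sa_algebra_norm ip N.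
Local Notation bounded := (bounded_op ip).
Local Notation ReOp := (ReOp ip).
Local Notation wN := (wN ip N).

Lemma bounded_ReOp X : bounded X -> bounded (ReOp X).
Proof. by move=> hX; apply/(bounded_opscale hH)/(bounded_opadd hH) => //; exact: bounded_adj. Qed.

Lemma N_ReOp_le X : bounded X -> N (ReOp X) <= N X.
Proof.
move=> hX; have hX' := bounded_adj hH hX.
rewrite (N_scale hN) ?normc_half; last exact: bounded_opadd.
have := N_triangle hN hX hX'; rewrite (N_adj hN hX); lra.
Qed.

Lemma N_ReOp_expi_le X t : bounded X -> N (ReOp (opscale (expi t) X)) <= N X.
Proof.
move=> hX; have htX := bounded_opscale hH (expi t) hX.
by apply: le_trans (N_ReOp_le htX) _; rewrite (N_scale hN) // normc_expi mul1r.
Qed.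

Lemma N_ReOp_le_wN X t : bounded X -> N (ReOp (opscale (expi t) X)) <= wN X.
Proof.
move=> hX; apply: ub_le_sup; last by exists t.
by exists (N X) => _ [s ->]; exact: N_ReOp_expi_le.
Qed.

Lemma wN_ge0 X : bounded X -> 0 <= wN X.
Proof.
move=> hX; apply: le_trans (N_ReOp_le_wN 0 hX).
exact/(N_ge0 hN)/bounded_ReOp/(bounded_opscale hH).
Qed.

Lemma wN_le_bound X r : (forall t, N (ReOp (opscale (expi t) X)) <= r) -> wN X <= r.
Proof.
by move=> Xr; apply: ge_sup => [|_ [t ->] //]; exists (N (ReOp (opscale (expi 0) X))), 0.
Qed.

Lemma ReOp_opadd X Y : bounded X -> bounded Y -> ReOp (opadd X Y) = opadd (ReOp X) (ReOp Y).
Proof.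
move=> hX hY; apply: funext => x.
by rewrite /ReOp (adj_opadd hH) // /opscale /opadd -scalerDr addrACA.
Qed.

Lemma ReOp_decomposition X : bounded X ->
  X = opadd (ReOp (opscale (expi 0) X)) (opscale 'i%C (ReOp (opscale (expi (- (pi / 2))) X))).
Proof.
move=> hX; apply: funext => x.
rewrite /Defs.ReOp !(adj_opscale hH) // expi0 expi_Npihalf /opadd /opscale.
rewrite !scalerDr !scalerA addrACA -!scalerDl.
have -> : 2^-1 * 1 + 'i%C * 2^-1 * - 'i%C = 1 :> R[i].
  by rewrite mulr1 mulrN mulrAC -expr2 sqrCi mulN1r opprK [RHS](splitr 1) mul1r.
have -> : 2^-1 * 1^*%C + 'i%C / 2 * (- 'i%C)^*%C = 0 :> R[i].
  have -> : (- 'i%C)^*%C = 'i%C :> R[i] by apply/eqP; rewrite eq_complex /= oppr0 opprK !eqxx.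
  by rewrite rmorph1 mulr1 mulrAC -expr2 sqrCi mulN1r subrr.
by rewrite scale1r scale0r addr0.
Qed.

Lemma N_le_2wN X : bounded X -> N X <= 2 * wN X.
Proof.
move=> hX; rewrite {1}(ReOp_decomposition hX).
have hR t := bounded_ReOp (bounded_opscale hH (expi t) hX).
apply: le_trans (N_triangle hN (hR 0) (bounded_opscale hH 'i%C (hR _))) _.
have normc_i : ComplexField.Normc.normc ('i%C : R[i]) = 1 by rewrite /= expr0n expr1n add0r sqrtr1.
rewrite (N_scale hN) // normc_i mul1r.
by have := N_ReOp_le_wN 0 hX; have := N_ReOp_le_wN (- (pi / 2)) hX; lra.
Qed.

Lemma wN_opadd_le X Y : bounded X -> bounded Y -> wN (opadd X Y) <= wN X + wN Y.
Proof.
move=> hX hY; apply: wN_le_bound => t.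
have -> : opscale (expi t) (opadd X Y) = opadd (opscale (expi t) X) (opscale (expi t) Y).
  by apply: funext => x; rewrite /opscale /opadd scalerDr.
have htX := bounded_opscale hH (expi t) hX; have htY := bounded_opscale hH (expi t) hY.
rewrite ReOp_opadd //; apply: le_trans (N_triangle hN (bounded_ReOp htX) (bounded_ReOp htY)) _.
by rewrite lerD ?N_ReOp_le_wN.
Qed.

Lemma wN_opsub_le X Y : bounded X -> bounded Y -> wN (opsub X Y) <= wN X + wN Y.
Proof.
move=> hX hY; have hNY := bounded_opscale hH (-1) hY.
have -> : opsub X Y = opadd X (opscale (-1) Y).
  by apply: funext => x; rewrite /opsub /opadd /opscale scaleN1r.
apply: le_trans (wN_opadd_le hX hNY) _; rewrite lerD2l; apply: wN_le_bound => t.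
have htY := bounded_opscale hH (expi t) hY.
have -> : ReOp (opscale (expi t) (opscale (-1) Y)) = opscale (-1) (ReOp (opscale (expi t) Y)).
  apply: funext => x; rewrite /Defs.ReOp !(adj_opscale hH) // /opscale /opadd.
  by rewrite rmorphN1 !scaleN1r !scalerN -opprD scalerN.
rewrite (N_scale hN); last exact: bounded_ReOp.
(* normc (-1) = 1 by computation: this -1 does not match the pattern of normcN *)
rewrite [X in X * _]/= sqrrN expr1n oppr0 expr0n addr0 sqrtr1 mul1r.
exact: N_ReOp_le_wN.
Qed.

Lemma wN_comb_le_wNe B C l1 l2 : bounded B -> bounded C ->
  ComplexField.Normc.normc l1 ^+ 2 + ComplexField.Normc.normc l2 ^+ 2 <= 1 ->
  wN (opadd (opscale l1 B) (opscale l2 C)) <= wNe ip N B C.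
Proof.
move=> hB hC hl; apply: wN_le_bound => t; apply: ub_le_sup; last by exists l1, l2, t.
exists (N B + N C) => _ [m1 [m2 [s [hm ->]]]].
have hB' := bounded_opscale hH m1 hB; have hC' := bounded_opscale hH m2 hC.
apply: le_trans (N_ReOp_expi_le _ (bounded_opadd hH hB' hC')) _.
apply: le_trans (N_triangle hN hB' hC') _; rewrite !(N_scale hN) //.
have := normc_ge0 m1; have := normc_ge0 m2; have := N_ge0 hN hB; have := N_ge0 hN hC.
move: hm; move: (ComplexField.Normc.normc m1) (ComplexField.Normc.normc m2) (N B) (N C).
move=> p q b c hm c0 b0 q0 p0.
have p1 : p <= 1 by nra.
have q1 : q <= 1 by nra.
nra.
Qed.

Lemma wN_le_wNe B C : bounded B -> bounded C -> wN B <= wNe ip N B C /\ wN C <= wNe ip N B C.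
Proof.
move=> hB hC; have n1 := ComplexField.Normc.normc1 R; have n0 := ComplexField.Normc.normc0 R.
split.
  have {1}-> : B = opadd (opscale 1 B) (opscale 0 C).
    by apply: funext => x; rewrite /opadd /opscale scale1r scale0r addr0.
  by apply: wN_comb_le_wNe => //; rewrite n1 n0 expr1n expr0n addr0.
have {1}-> : C = opadd (opscale 0 B) (opscale 1 C).
  by apply: funext => x; rewrite /opadd /opscale scale1r scale0r add0r.
by apply: wN_comb_le_wNe => //; rewrite n1 n0 expr1n expr0n add0r.
Qed.

Lemma N_gram_le B C : bounded B -> bounded C ->
  N (opadd (opmul (adj ip C) C) (opmul (adj ip B) B)) <= 4 * (wN B ^+ 2 + wN C ^+ 2).
Proof.
move=> hB hC.
have N_adjmul X : bounded X -> N (opmul (adj ip X) X) <= 4 * wN X ^+ 2.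
  move=> hX; apply: le_trans (N_mul hN (bounded_adj hH hX) hX) _.
  by rewrite (N_adj hN hX); have := N_le_2wN hX; have := N_ge0 hN hX; nra.
have hCC := bounded_opmul (bounded_adj hH hC) hC; have hBB := bounded_opmul (bounded_adj hH hB) hB.
apply: le_trans (N_triangle hN hCC hBB) _.
by have := N_adjmul C hC; have := N_adjmul B hB; lra.
Qed.

End NumericalRadius.

Lemma max_sqr_bound (R : realFieldType) (p s x y w : R) :
  0 <= x -> 0 <= y -> p <= 4 * (x ^+ 2 + y ^+ 2) -> s <= x + y -> x <= w -> y <= w ->
  8^-1 * p + 2^-1 * s * `|x - y| <= w ^+ 2.
Proof.
move=> x0 y0 hp hs xw yw.
have hd : s * `|x - y| <= (x + y) * `|x - y| by rewrite ler_wpM2r.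
have [xy|yx] := leP x y.
  have : y ^+ 2 <= w ^+ 2 by nra.
  by move: hd; rewrite ler0_norm ?subr_le0 //; lra.
have : x ^+ 2 <= w ^+ 2 by nra.
have xy : 0 <= x - y by rewrite subr_ge0 ltW.
by move: hd; rewrite ger0_norm //; lra.
Qed.

Theorem corollary2p18 (R : realType) (H : lmodType R[i]) (ip : H -> H -> R[i])
  (hH : is_hilbert ip) (N : (H -> H) -> R) (hN : is_sa_algebra_norm ip N)
  (B C : H -> H) (hB : bounded_op ip B) (hC : bounded_op ip C) :
  8^-1 * N (opadd (opmul (adj ip C) C) (opmul (adj ip B) B))
  + 2^-1 * Num.max (wN ip N (opadd B C)) (wN ip N (opsub B C)) * `|wN ip N B - wN ip N C|
  <= wNe ip N B C ^+ 2.
Proof.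
have [wB wC] := wN_le_wNe hH hN hB hC.
apply: max_sqr_bound (wN_ge0 hH hN hB) (wN_ge0 hH hN hC) (N_gram_le hH hN hB hC) _ wB wC.
by rewrite ge_max wN_opadd_le // wN_opsub_le.
Qed.
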